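(* Let $k$ be a field, $V$ a finite dimensional $k$-vector space with basis $\{x_1,\dots,x_n\}$, and $F=\{f_i:V^{\otimes n_i}\to V^{\otimes m_i}\}_{i\in I}$ a family of linear maps ($n_i,m_i\in\mathbb{N}_0$). Let $A$ be a bialgebra and suppose $V$ is a left $A$-comodule with structure map $\rho_A:V\to A\otimes V$ such that every $f_i$ is $A$-colinear (where $V^{\otimes \ell}$ carries the tensor product comodule structure induced by the multiplication of $A$, and $V^{\otimes 0}=k$ the trivial comodule). Then there exists a unique bialgebra morphism $\pi:A(F)\to A$ such that $(\pi\otimes \mathrm{id}_V)\circ\rho=\rho_A$, where $\rho:V\to A(F)\otimes V$, $\rho(x_i)=\sum_j t_i^j\otimes x_j$.
   Context: $C$ is the coalgebra with basis $\{t_i^j\}_{i,j=1}^n$, $\Delta(t_i^j)=\sum_k t_i^k\otimes t_k^j$, $\epsilon(t_i^j)=\delta_i^j$; $TC$ is its tensor algebra with the induced bialgebra structure. For $I\in\{1,\dots,n\}^\ell$ write $x_I=x_{i_1}\otimes\cdots\otimes x_{i_\ell}$ and $t_I^J=t_{i_1}^{j_1}\cdots t_{i_\ell}^{j_\ell}$. For a linear map $f:V^{\otimes p}\to V^{\otimes q}$ with $f(x_I)=\sum_J f_I^Jx_J$, $\mathcal{I}_f$ is the two-sided ideal of $TC$ generated by the elements $\sum_{J} t_I^J f_J^K-\sum_J f_I^J t_J^K$ for all $I\in\{1,\dots,n\}^p$, $K\in\{1,\dots,n\}^q$ (first sum over $J\in\{1,\dots,n\}^p$, second over $J\in\{1,\dots,n\}^q$).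 Each $\mathcal{I}_f$ is a bi-ideal, and $A(F):=TC/\mathcal{I}_F$ with $\mathcal{I}_F=\sum_{i\in I}\mathcal{I}_{f_i}$ is a bialgebra; $V$ is an $A(F)$-comodule via $\rho(x_i)=\sum_j t_i^j\otimes x_j$ and all $f_i$ are $A(F)$-colinear. *)

From HB Require Import structures.
From mathcomp Require Import all_boot all_order all_algebra.
From mathcomp Require Import finmap generic_quotient.
From mathcomp.classical Require Import boolp.
From mathcomp.multinomials Require Import monalg.

Set Implicit Arguments.
Unset Strict Implicit.
Unset Printing Implicit Defensive.

Import GRing.Theory.
Local Open Scope ring_scope.
Local Open Scope quotient_scope.

Section Tensors.
Variable k : fieldType.

Definition bilinform (A B : lmodType k) (b : A -> B -> k) : Prop :=
  (forall c x x' y, b (c *: x + x') y = c * b x y + b x' y) /\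
  (forall c x y y', b x (c *: y + y') = c * b x y + b x y').

Definition teq2 (A B : lmodType k) (s t : seq (A * B)) : Prop :=
  forall b : A -> B -> k, bilinform b ->
    \sum_(p <- s) b p.1 p.2 = \sum_(p <- t) b p.1 p.2.

End Tensors.

Section TC.
Variables (k : fieldType) (n : nat).
Definition TC := {malg k[{fmonom ('I_n * 'I_n)%type}]}.
Definition tgen (i j : 'I_n) : TC := << FMonom [:: (i, j)] >>.
Definition tmon (I J : seq 'I_n) : TC := \prod_(p <- zip I J) tgen p.1 p.2.
Definition TC_Delta (u : TC) : seq (TC * TC) :=
  flatten [seq [seq (u@_w *: tmon (unzip1 (fmonom_val w)) (val K),
                     tmon (val K) (unzip2 (fmonom_val w)))
               | K : (size (fmonom_val w)).-tuple 'I_n] | w <- msupp u].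
Definition TC_eps (u : TC) : k :=
  \sum_(w <- msupp u) u@_w * \prod_(p <- fmonom_val w) (p.1 == p.2)%:R.
End TC.

Section Main.
Variables (k : fieldType) (n : nat).

Inductive in_ideal (R : pzRingType) (G : R -> Prop) : R -> Prop :=
  | ideal_gen g : G g -> in_ideal G g
  | ideal0 : in_ideal G 0
  | idealD u v : in_ideal G u -> in_ideal G v -> in_ideal G (u + v)
  | idealMl c u : in_ideal G u -> in_ideal G (c * u)
  | idealMr u c : in_ideal G u -> in_ideal G (u * c).

Record linmap := LinMap {
  ldom : nat; lcod : nat;
  lcoef : ldom.-tuple 'I_n -> lcod.-tuple 'I_n -> k }.

Definition If_gen (f : linmap) (I : (ldom f).-tuple 'I_n)
    (K : (lcod f).-tuple 'I_n) : TC k n :=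
  \sum_(J : (ldom f).-tuple 'I_n) @lcoef f J K *: tmon k (val I) (val J)
  - \sum_(J : (lcod f).-tuple 'I_n) @lcoef f I J *: tmon k (val J) (val K).

Variables (Iset : Type) (F : Iset -> linmap).

Definition IF_gens (u : TC k n) : Prop :=
  exists i I K, u = @If_gen (F i) I K.

Definition IF : TC k n -> Prop := in_ideal IF_gens.

Definition eqIF (u v : TC k n) : bool := `[< IF (u - v) >].

Lemma eqIF_refl : reflexive eqIF.
Proof. by move=> u; apply/asboolP; rewrite subrr; apply: ideal0. Qed.

Lemma eqIF_sym : symmetric eqIF.
Proof.
move=> u v; apply/asboolP/asboolP => H.
  by rewrite -opprB -mulN1r; apply: idealMl.
by rewrite -opprB -mulN1r; apply: idealMl.
Qed.

Lemma eqIF_trans : transitive eqIF.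
Proof.
move=> v u w /asboolP H1 /asboolP H2; apply/asboolP.
have -> : u - w = (u - v) + (v - w) by rewrite addrA subrK.
exact: idealD.
Qed.

Canonical eqIF_rel := EquivRel eqIF eqIF_refl eqIF_sym eqIF_trans.

Definition AF := {eq_quot eqIF_rel}.
Definition piAF (u : TC k n) : AF := \pi_AF u.
Definition AF_add (x y : AF) : AF := piAF (repr x + repr y).
Definition AF_mul (x y : AF) : AF := piAF (repr x * repr y).
Definition AF_one : AF := piAF 1.
Definition AF_scale (c : k) (x : AF) : AF := piAF (c *: repr x).
Definition AF_Delta (x : AF) : seq (AF * AF) :=
  [seq (piAF p.1, piAF p.2) | p <- TC_Delta (repr x)].
Definition AF_eps (x : AF) : k := TC_eps (repr x).
Definition rhoAF (i j : 'I_n) : AF := piAF (tgen k i j).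

End Main.

Section Bialgebra.
Variable k : fieldType.

Definition trilinform (A B C : lmodType k) (b : A -> B -> C -> k) : Prop :=
  (forall c x x' y z, b (c *: x + x') y z = c * b x y z + b x' y z) /\
  (forall c x y y' z, b x (c *: y + y') z = c * b x y z + b x y' z) /\
  (forall c x y z z', b x y (c *: z + z') = c * b x y z + b x y z').

Definition teq3 (A B C : lmodType k) (s t : seq (A * B * C)) : Prop :=
  forall b : A -> B -> C -> k, trilinform b ->
    \sum_(p <- s) b p.1.1 p.1.2 p.2 = \sum_(p <- t) b p.1.1 p.1.2 p.2.

Variable A : algType k.
Implicit Types (Delta : A -> seq (A * A)) (eps : A -> k).

Definition is_bialgebra Delta eps : Prop :=
  [/\ (* Delta : A -> A (x) A is k-linear *)
      (forall c x y, teq2 (Delta (c *: x + y))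
                          ([seq (c *: p.1, p.2) | p <- Delta x] ++ Delta y)),
      (* Delta is multiplicative and unital *)
      (forall x y, teq2 (Delta (x * y))
                        [seq (p.1 * q.1, p.2 * q.2) | p <- Delta x, q <- Delta y]),
      teq2 (Delta 1) [:: (1, 1)],
      (* coassociativity: (Delta (x) id) Delta = (id (x) Delta) Delta *)
      (forall x, teq3 [seq (q.1, q.2, p.2) | p <- Delta x, q <- Delta p.1]
                      [seq (p.1, q.1, q.2) | p <- Delta x, q <- Delta p.2]) &
      (forall x, \sum_(p <- Delta x) eps p.1 *: p.2 = x
                 /\ \sum_(p <- Delta x) eps p.2 *: p.1 = x)]
  /\
  [/\ (forall c x y, eps (c *: x + y) = c * eps x + eps y),
      (forall x y, eps (x * y) = eps x * eps y) & eps 1 = 1].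

Variable n : nat.

Definition amon (a : 'I_n -> 'I_n -> A) (I J : seq 'I_n) : A :=
  \prod_(p <- zip I J) a p.1 p.2.

Definition is_comodule Delta eps (a : 'I_n -> 'I_n -> A) : Prop :=
  (forall i j, teq2 (Delta (a i j)) [seq (a i l, a l j) | l : 'I_n]) /\
  (forall i j, eps (a i j) = (i == j)%:R).

Definition colinear (a : 'I_n -> 'I_n -> A) (f : linmap k n) : Prop :=
  forall (I : (ldom f).-tuple 'I_n) (J : (lcod f).-tuple 'I_n),
    \sum_(K : (lcod f).-tuple 'I_n) @lcoef _ _ f I K *: amon a (val K) (val J)
    = \sum_(K : (ldom f).-tuple 'I_n) @lcoef _ _ f K J *: amon a (val I) (val K).

Variables (Iset : Type) (F : Iset -> linmap k n).

Definition is_bialg_morph_AF Delta eps (pi : AF F -> A) : Prop :=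
  [/\ (forall x y, pi (AF_add x y) = pi x + pi y),
      (forall x y, pi (AF_mul x y) = pi x * pi y),
      pi (AF_one F) = 1,
      (forall c x, pi (AF_scale c x) = c *: pi x) &
   (forall x, teq2 [seq (pi p.1, pi p.2) | p <- AF_Delta x] (Delta (pi x)))
   /\ (forall x, eps (pi x) = AF_eps x)].

End Bialgebra.

From Pilot Require Import Defs.
From HB Require Import structures.
From mathcomp Require Import all_boot all_order all_algebra.
From mathcomp Require Import finmap generic_quotient.
From mathcomp.classical Require Import boolp.
From mathcomp.multinomials Require Import monalg.
Import GRing.Theory.
Local Open Scope ring_scope.

Set Implicit Arguments.
Unset Strict Implicit.
Unset Printing Implicit Defensive.

(* TC is the free algebra on the t_i^j, so t_i^j |-> a_i^j extends to a unique
   algebra map TC -> A. Colinearity of f is literally the statement that this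
   map kills the generators of I_f, so it factors through A(F). It respects
   comultiplication because both sides are multiplicative and agree on the
   generators (that is the comodule axiom for a), and it respects the counit
   for the same reason. Uniqueness holds because the t_i^j generate A(F) as
   an algebra. *)

Lemma big_tupleS (R : nmodType) (T : finType) m (G : m.+1.-tuple T -> R) :
  \sum_(K : m.+1.-tuple T) G K = \sum_(l : T) \sum_(K : m.-tuple T) G [tuple of l :: K].
Proof.
rewrite pair_big /= (reindex (fun p : T * m.-tuple T => [tuple of p.1 :: p.2])) //=.
exists (fun K => (thead K, [tuple of behead K])).
  by move=> [l K] _ /=; rewrite theadE; congr pair; apply: val_inj.
by move=> K _; rewrite [RHS]tuple_eta.
Qed.

Lemma big_tuple0 (R : nmodType) (T : finType) (G : 0.-tuple T -> R) :
  \sum_(K : 0.-tuple T) G K = G [tuple].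
Proof.
rewrite (eq_bigr (fun _ => G [tuple])) => [|K _]; last by rewrite tuple0.
by rewrite sumr_const card_tuple expn0.
Qed.

Lemma monalgUZ (K : monomType) (R : nzRingType) (c : R) (w : K) :
  << c *g w >> = c *: << w >> :> {malg R[K]}.
Proof. by apply/malgP => m; rewrite mcoeffZ !mcoeffU mulr_natr. Qed.

Section Evaluation.
Variables (k : fieldType) (n : nat) (A : algType k) (a : 'I_n -> 'I_n -> A).

Definition aprod (s : seq ('I_n * 'I_n)) : A := \prod_(p <- s) a p.1 p.2.

Definition fmonom_eval (w : {fmonom ('I_n * 'I_n)%type}) : A := aprod (fmonom_val w).

Lemma fmonom_eval_is_mmorphism : mmorphism fmonom_eval.
Proof. by split=> [x y|]; rewrite /fmonom_eval /aprod ?fmM ?fm1 ?big_cat ?big_nil. Qed.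

HB.instance Definition _ :=
  isMultiplicative.Build _ A fmonom_eval fmonom_eval_is_mmorphism.

Definition tc_eval (u : TC k n) : A := mmap (in_alg A) fmonom_eval u.

HB.instance Definition _ :=
  GRing.Additive.copy tc_eval (mmap (in_alg A) fmonom_eval).

Lemma tc_eval_is_monoid_morphism : monoid_morphism tc_eval.
Proof.
have [] // := @commr_mmap_is_multiplicative _ _ _ (in_alg A) fmonom_eval.
by move=> c w w'; rewrite /GRing.comm /= mulr_algl mulr_algr.
Qed.

HB.instance Definition _ :=
  GRing.isMonoidMorphism.Build (TC k n) A tc_eval tc_eval_is_monoid_morphism.

Lemma tc_eval_is_scalable : scalable tc_eval.
Proof. by move=> c u; rewrite /tc_eval mmapZ /= mulr_algl. Qed.

HB.instance Definition _ :=
  GRing.isScalable.Build k (TC k n) A *:%R tc_eval tc_eval_is_scalable.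

Lemma tc_evalE u : tc_eval u = \sum_(w <- msupp u) u@_w *: fmonom_eval w.
Proof. by rewrite /tc_eval mmapE; apply: eq_bigr => w _; rewrite /= mulr_algl. Qed.

Lemma tc_eval_tgen i j : tc_eval (tgen k i j) = a i j.
Proof. by rewrite /tc_eval mmapU /= /fmonom_eval /aprod big_seq1 mulr_algl scale1r. Qed.

Lemma tc_eval_tmon I J : tc_eval (tmon k I J) = amon a I J.
Proof. by rewrite rmorph_prod; apply: eq_bigr => p _; rewrite /= tc_eval_tgen. Qed.

Lemma tc_eval_If_gen (f : linmap k n) I K :
  colinear a f -> tc_eval (If_gen (f := f) I K) = 0.
Proof.
move=> colf; rewrite raddfB !(raddf_sum tc_eval) /=.
under eq_bigr do rewrite linearZ /= tc_eval_tmon.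
under [X in _ - X]eq_bigr do rewrite linearZ /= tc_eval_tmon.
by rewrite colf subrr.
Qed.

Lemma tc_eval_IF (Iset : Type) (F : Iset -> linmap k n) u :
  (forall i, colinear a (F i)) -> IF F u -> tc_eval u = 0.
Proof.
move=> colF; elim=> [g [i [I [K ->]]]| |u1 u2 _ IH1 _ IH2|c v _ IH|v c _ IH].
- exact: tc_eval_If_gen.
- exact: raddf0.
- by rewrite raddfD /= IH1 IH2 addr0.
- by rewrite rmorphM /= IH mulr0.
- by rewrite rmorphM /= IH mul0r.
Qed.

Lemma malgU_fmonom (s : seq ('I_n * 'I_n)) :
  << FMonom s >> = \prod_(p <- s) tgen k p.1 p.2 :> TC k n.
Proof.
elim: s => [|p s IH].
  by rewrite big_nil -mpolyC1E; congr << _ *g _ >>; apply/eqP; rewrite fmP /= fm1.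
rewrite big_cons -IH /tgen malgM_def fgmulUU mulr1; congr << _ *g _ >>.
by apply: val_inj; rewrite /= fmM; case: p.
Qed.

Lemma tc_eval_unique (psi : TC k n -> A) :
  {morph psi : x y / x + y} -> (forall c x, psi (c *: x) = c *: psi x) ->
  {morph psi : x y / x * y} -> psi 1 = 1 ->
  (forall i j, psi (tgen k i j) = a i j) -> psi =1 tc_eval.
Proof.
move=> psiD psiZ psiM psi1 psi_t u; rewrite tc_evalE {1}(monalgE u).
elim: (enum_fset (msupp u)) => [|w s IH].
  by rewrite !big_nil -(scale0r 0) psiZ scale0r.
rewrite !big_cons psiD IH monalgUZ psiZ; congr (_ *: _ + _).
case: w => s'; rewrite malgU_fmonom (big_morph psi psiM psi1).
by apply: eq_bigr => p _; rewrite psi_t.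
Qed.

End Evaluation.

Section BilinearForms.
Variable k : fieldType.

Definition bsum (A B : lmodType k) (b : A -> B -> k) (s : seq (A * B)) : k :=
  \sum_(p <- s) b p.1 p.2.

Lemma bilinform0l (A B : lmodType k) (b : A -> B -> k) y :
  bilinform b -> b 0 y = 0.
Proof.
case=> bD _; apply/eqP; have := bD 1 0 0 y.
by rewrite scale1r addr0 mul1r => /eqP; rewrite -subr_eq subrr eq_sym.
Qed.

Lemma bilinformZl (A B : lmodType k) (b : A -> B -> k) c x y :
  bilinform b -> b (c *: x) y = c * b x y.
Proof. by move=> bb; have := bb.1 c x 0 y; rewrite addr0 bilinform0l // addr0. Qed.

Variable A : algType k.

Lemma bilinform_mull (b : A -> A -> k) (p1 p2 : A) :
  bilinform b -> bilinform (fun x y => b (p1 * x) (p2 * y)).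
Proof. by case=> bl br; split=> c x x' y /=; rewrite mulrDr -scalerAr ?bl ?br. Qed.

Lemma bilinform_mulr (b : A -> A -> k) (p1 p2 : A) :
  bilinform b -> bilinform (fun x y => b (x * p1) (y * p2)).
Proof. by case=> bl br; split=> c x x' y /=; rewrite mulrDl -scalerAl ?bl ?br. Qed.

End BilinearForms.

Section Coalgebra.
Variables (k : fieldType) (n : nat) (A : algType k) (Delta : A -> seq (A * A)).
Variables (eps : A -> k) (a : 'I_n -> 'I_n -> A).
Hypotheses (HA : is_bialgebra Delta eps) (Ha : is_comodule Delta eps a).

Lemma bsum_Delta_lin b c x y : bilinform b ->
  bsum b (Delta (c *: x + y)) = c * bsum b (Delta x) + bsum b (Delta y).
Proof.
move=> bb; case: HA => [[DeltaL _ _ _ _] _].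
rewrite /bsum (DeltaL c x y b bb) big_cat big_map /= mulr_sumr.
by congr (_ + _); apply: eq_bigr => p _; rewrite bilinformZl.
Qed.

Lemma bsum_Delta0 b : bilinform b -> bsum b (Delta 0) = 0.
Proof.
move=> bb; have := bsum_Delta_lin (-1) 0 0 bb.
by rewrite scaler0 addr0 mulN1r addNr.
Qed.

Lemma bsum_Delta_sum b (T : Type) (s : seq T) (c : T -> k) (x : T -> A) :
  bilinform b ->
  bsum b (Delta (\sum_(i <- s) c i *: x i)) = \sum_(i <- s) c i * bsum b (Delta (x i)).
Proof.
move=> bb; elim: s => [|i s IH]; first by rewrite !big_nil bsum_Delta0.
by rewrite !big_cons bsum_Delta_lin // IH.
Qed.

Lemma bsum_DeltaM b x y : bilinform b ->
  bsum b (Delta (x * y)) =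
  \sum_(p <- Delta x) \sum_(q <- Delta y) b (p.1 * q.1) (p.2 * q.2).
Proof.
move=> bb; case: HA => [[_ DeltaM _ _ _] _].
by rewrite /bsum DeltaM // big_allpairs_dep.
Qed.

Lemma bsum_Delta_aprod b s : bilinform b ->
  bsum b (Delta (aprod a s)) =
  \sum_(K : (size s).-tuple 'I_n) b (amon a (unzip1 s) K) (amon a K (unzip2 s)).
Proof.
elim: s b => [|[i j] s IH] b bb.
  case: HA => [[_ _ Delta1 _ _] _].
  by rewrite big_tuple0 /aprod /amon !big_nil /bsum Delta1 // big_seq1.
rewrite /aprod big_cons -/(aprod a s) bsum_DeltaM //.
under eq_bigr => p _.
  rewrite -/(bsum (fun x y => b (p.1 * x) (p.2 * y)) (Delta (aprod a s))).
  rewrite IH; last exact: bilinform_mull.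
  over.
rewrite /= exchange_big big_tupleS /=.
under eq_bigr => K _.
  rewrite (Ha.1 i j _ (bilinform_mulr (amon a (unzip1 s) K) (amon a K (unzip2 s)) bb)).
  over.
rewrite exchange_big big_image /=; apply: eq_bigr => l _.
by apply: eq_bigr => K _; rewrite /amon !big_cons.
Qed.

Lemma bsum_Delta_tc_eval b u : bilinform b ->
  bsum b [seq (tc_eval a p.1, tc_eval a p.2) | p <- TC_Delta u] =
  bsum b (Delta (tc_eval a u)).
Proof.
move=> bb; rewrite /bsum big_map /TC_Delta big_flatten big_map /=.
rewrite tc_evalE -/(bsum b _) bsum_Delta_sum //; apply: eq_bigr => w _.
rewrite big_image /= bsum_Delta_aprod // mulr_sumr.
by apply: eq_bigr => K _; rewrite linearZ /= !tc_eval_tmon bilinformZl.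
Qed.

Lemma counit_lin c x y : eps (c *: x + y) = c * eps x + eps y.
Proof. by case: HA => _ [epsL _ _]; apply: epsL. Qed.

Lemma counit0 : eps 0 = 0.
Proof. by have := counit_lin (-1) 0 0; rewrite scaler0 addr0 mulN1r addNr. Qed.

Lemma counit_tc_eval u : eps (tc_eval a u) = TC_eps u.
Proof.
rewrite tc_evalE /TC_eps; case: HA => _ [_ epsM eps1].
elim: (enum_fset (msupp u)) => [|w s IH]; first by rewrite !big_nil counit0.
rewrite !big_cons counit_lin IH /fmonom_eval /aprod (big_morph eps epsM eps1).
by congr (_ * _ + _); apply: eq_bigr => p _; rewrite Ha.2.
Qed.

End Coalgebra.

Section Quotient.
Variables (k : fieldType) (n : nat) (Iset : Type) (F : Iset -> linmap k n).

Lemma piAF_eq u v : IF F (u - v) -> piAF F u = piAF F v.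
Proof. by move=> IFuv; apply/eqmodP/asboolP. Qed.

Lemma IF_repr_piAF u : IF F (repr (piAF F u) - u).
Proof.
have : piAF F (repr (piAF F u)) = piAF F u by rewrite /piAF reprK.
by move/eqmodP/asboolP.
Qed.

Lemma AF_addE u v : AF_add (piAF F u) (piAF F v) = piAF F (u + v).
Proof.
apply: piAF_eq; rewrite opprD addrACA.
by apply: Defs.idealD; apply: IF_repr_piAF.
Qed.

Lemma AF_mulE u v : AF_mul (piAF F u) (piAF F v) = piAF F (u * v).
Proof.
apply: piAF_eq.
have -> : repr (piAF F u) * repr (piAF F v) - u * v =
    (repr (piAF F u) - u) * repr (piAF F v) + u * (repr (piAF F v) - v).
  by rewrite mulrBl mulrBr addrA subrK.
by apply: Defs.idealD; [apply: Defs.idealMr | apply: Defs.idealMl]; apply: IF_repr_piAF.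
Qed.

Lemma AF_scaleE c u : AF_scale c (piAF F u) = piAF F (c *: u).
Proof.
apply: piAF_eq; rewrite -scalerBr -mul_malgC.
by apply: Defs.idealMl; apply: IF_repr_piAF.
Qed.

End Quotient.

Section Lift.
Variables (k : fieldType) (n : nat) (Iset : Type) (F : Iset -> linmap k n).
Variables (A : algType k) (a : 'I_n -> 'I_n -> A).
Hypothesis colF : forall i, colinear a (F i).

Definition AF_lift (x : AF F) : A := tc_eval a (repr x).

Lemma AF_lift_pi u : AF_lift (piAF F u) = tc_eval a u.
Proof.
apply/eqP; rewrite -subr_eq0 -raddfB /= (tc_eval_IF colF) //.
exact: IF_repr_piAF.
Qed.

Lemma AF_lift_rho i j : AF_lift (rhoAF F i j) = a i j.
Proof. by rewrite AF_lift_pi tc_eval_tgen. Qed.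

Lemma AF_lift_bialg_morph (Delta : A -> seq (A * A)) (eps : A -> k) :
  is_bialgebra Delta eps -> is_comodule Delta eps a ->
  is_bialg_morph_AF Delta eps AF_lift.
Proof.
move=> HA Ha; split.
- by move=> x y; rewrite AF_lift_pi raddfD.
- by move=> x y; rewrite AF_lift_pi rmorphM.
- by rewrite AF_lift_pi rmorph1.
- by move=> c x; rewrite AF_lift_pi linearZ.
split=> x; last exact: (counit_tc_eval HA Ha).
move=> b bb; rewrite /AF_Delta -map_comp.
under eq_map => p do rewrite /= !AF_lift_pi.
exact: (bsum_Delta_tc_eval HA Ha).
Qed.

Lemma AF_lift_unique (pi : AF F -> A) :
  (forall x y, pi (AF_add x y) = pi x + pi y) ->
  (forall x y, pi (AF_mul x y) = pi x * pi y) -> pi (AF_one F) = 1 ->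
  (forall c x, pi (AF_scale c x) = c *: pi x) ->
  (forall i j, pi (rhoAF F i j) = a i j) -> pi = AF_lift.
Proof.
move=> piD piM pi1 piZ pi_rho; apply: funext => x.
rewrite -[x]reprK -/(piAF F _) AF_lift_pi.
apply: (tc_eval_unique (psi := fun u => pi (piAF F u))) => //.
- by move=> u v; rewrite -AF_addE piD.
- by move=> c u; rewrite -AF_scaleE piZ.
- by move=> u v; rewrite -AF_mulE piM.
Qed.

End Lift.

Theorem mainTheorem2 (k : fieldType) (n : nat) (Iset : Type)
    (F : Iset -> linmap k n)
    (A : algType k) (Delta : A -> seq (A * A)) (eps : A -> k)
    (HA : is_bialgebra Delta eps)
    (a : 'I_n -> 'I_n -> A) (Ha : is_comodule Delta eps a)
    (Hcol : forall i : Iset, colinear a (F i)) :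
  exists! pi : AF F -> A,
    is_bialg_morph_AF Delta eps pi /\
    (forall i j : 'I_n, pi (rhoAF F i j) = a i j).
Proof.
exists (AF_lift a); split.
  by split; [apply: AF_lift_bialg_morph | apply: AF_lift_rho].
move=> pi [[piD piM pi1 piZ _] pi_rho]; symmetry.
exact: AF_lift_unique.
Qed.
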